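(* For all integers $r\ge 3$ and $n\ge 1$, $$\max\Bigl\{\alpha\bigl(C_{d,q}^{\boxtimes n}\bigr)\;:\; q,d\in\mathbb N,\ q\ge 2d,\ q/d<r\Bigr\}=\frac{1+r^n(r-2)}{r-1}.$$
   Context: For positive integers $q,d$ with $q\ge 2d$, the circular graph $C_{d,q}$ has vertex set $\mathbb Z_q$, two distinct vertices $x,y$ being adjacent iff $\min\{|x-y|,q-|x-y|\}<d$ (viewing $x,y$ as integers in $\{0,\dots,q-1\}$). For a graph $G=(V,E)$, the strong product power $G^{\boxtimes n}$ has vertex set $V^n$, two distinct vertices $(u_1,\dots,u_n),(v_1,\dots,v_n)$ being adjacent iff for every $i$ either $u_i=v_i$ or $u_iv_i\in E$. $\alpha(G)$ is the maximum size of an independent set (a set of pairwise non-adjacent vertices) of $G$. *)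

From mathcomp Require Import all_boot.
Set Implicit Arguments. Unset Strict Implicit. Unset Printing Implicit Defensive.

Definition circ_adj (q d : nat) : rel 'I_q :=
  fun x y => let k := maxn x y - minn x y in
             (x != y) && (minn k (q - k) < d).

Definition strong_pow (T : finType) (e : rel T) (n : nat) : rel {ffun 'I_n -> T} :=
  fun u v => (u != v) && [forall i, (u i == v i) || e (u i) (v i)].

Definition independent (T : finType) (e : rel T) (S : {set T}) : bool :=
  [forall x in S, forall y in S, ~~ e x y].

Definition alpha (T : finType) (e : rel T) : nat :=
  \max_(S : {set T} | independent e S) #|S|.

From mathcomp Require Import all_boot zify.
Set Implicit Arguments. Unset Strict Implicit. Unset Printing Implicit Defensive.

(* The maximum of alpha(C_{d,q}^n) over q/d < r equals b_n = (1 + r^n (r-2))/(r-1),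
   where b_0 = 1 and b_(n+1) = r b_n - 1.

   The q windows {j, ..., j+d-1} of C_{d,q} are cliques covering every
   vertex exactly d times.  For any graph G with such a cover, slicing an independent
   set of G^(n+1) by the window containing its last coordinate gives
   d alpha(G^(n+1)) <= q alpha(G^n); with q < r d this yields
   alpha(C_{d,q}^(n+1)) <= r b_n - 1 = b_(n+1).

   For N = b_(m+1) and M = b_m (so N / M < r), the N words
   (k, k r, ..., k r^m) mod N are independent in C_{M,N}^(m+1).  This reduces to an
   arithmetic fact: every 0 < k < N has a multiple k r^i (i <= m) at cyclic distance
   >= M from 0 mod N.  Otherwise all base-r digits of k/N up to position m+1 would
   lie in {0, r-1}, and the identity (r-1) N = 1 + r^(m+1) (r-2) forces k = 0. *)

Fixpoint circ_bound (r n : nat) : nat :=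
  if n is m.+1 then r * circ_bound r m - 1 else 1.

Section Bound.
Variable r : nat.
Hypothesis r_ge2 : 2 <= r.

Lemma circ_bound_gt0 n : 0 < circ_bound r n.
Proof. by elim: n => [|n IH] //=; nia. Qed.

Lemma circ_bound_closed n : (r - 1) * circ_bound r n = 1 + r ^ n * (r - 2).
Proof.
elim: n => [|n IH] /=; first lia.
have := circ_bound_gt0 n; rewrite expnS; move: (r ^ n) IH => P; nia.
Qed.

Lemma circ_bound_div n : (1 + r ^ n * (r - 2)) %/ (r - 1) = circ_bound r n.
Proof. by rewrite -circ_bound_closed mulKn //; lia. Qed.

Lemma circ_bound_le_pow n : circ_bound r n <= r ^ n.
Proof.
elim: n => [|n IH] //=; rewrite expnS; have := circ_bound_gt0 n.
move: (r ^ n) IH => P; nia.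
Qed.

End Bound.

Section FarPower.
Variables r m : nat.
Hypothesis r_ge3 : 3 <= r.

Local Notation N := (circ_bound r m.+1).
Local Notation M := (circ_bound r m).

Let r_ge2 : 2 <= r. Proof. by apply: ltnW. Qed.
Let N_gt0 : 0 < N. Proof. exact: circ_bound_gt0. Qed.
Let N_eq : N = r * M - 1. Proof. by []. Qed.

(* A residue is far from 0 when its cyclic distance to 0 modulo [N] is at least [M]. *)
Definition far (x : nat) : bool := M <= x <= N - M.

(* Multiplying a residue near 0 by [r] produces the base-[r] digit 0 or [r-1]. *)
Lemma near_digit x : x < N -> ~~ far x -> (r * x) %/ N = 0 \/ (r * x) %/ N = r - 1.
Proof.
move=> x_lt; rewrite /far negb_and -!ltnNge => /orP [x_small | x_big].
  by left; apply: divn_small; have := N_eq; nia.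
right; have -> : r * x = (r - 1) * N + (r * x - (r - 1) * N) by have := N_eq; nia.
by rewrite divnMDl // divn_small; have := N_eq; nia.
Qed.

Lemma divn_mulr_split a : (r * a) %/ N = r * (a %/ N) + (r * (a %% N)) %/ N.
Proof. by rewrite {1}(divn_eq a N) mulnDr mulnA divnMDl. Qed.

(* If the orbit [k, k r, k r^2, ...] stays near 0 modulo [N] for [i] steps, then the
   first [i] base-[r] digits of [k / N] all lie in [{0, r-1}]: the integer part of
   [k r^i / N] is [(r-1) E] with [E] a number with 0/1 digits, so [E <= r^i - b_i]. *)
Lemma near_orbit_quotient k i : k < N -> i <= m.+1 ->
    (forall h, h < i -> ~~ far ((k * r ^ h) %% N)) ->
  exists2 E, E <= r ^ i - circ_bound r i & (k * r ^ i) %/ N = (r - 1) * E.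
Proof.
move=> k_lt; elim: i => [|i IH] i_le near.
  by exists 0; rewrite // expn0 muln1 muln0 divn_small.
have [E E_le quotE] := IH (ltnW i_le) (fun h h_lt => near h (ltnW h_lt)).
have bi_gt0 := circ_bound_gt0 r_ge2 i; have bi_le := circ_bound_le_pow r_ge2 i.
rewrite expnS mulnCA divn_mulr_split quotE.
have [->|->] := near_digit (ltn_pmod _ N_gt0) (near i (ltnSn i)).
- exists (r * E); last by rewrite addn0 mulnCA.
  by rewrite /=; move: (r ^ i) bi_le E_le => P; nia.
- exists (r * E + 1); last by rewrite mulnDr muln1 mulnCA.
  by rewrite /=; move: (r ^ i) bi_le E_le => P; nia.
Qed.

Lemma far_power k : 0 < k < N -> exists2 i, i < m.+1 & far ((k * r ^ i) %% N).
Proof.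
case/andP=> k_gt0 k_lt.
have [/existsP [i far_i] | ] := boolP [exists i : 'I_m.+1, far ((k * r ^ i) %% N)].
  by exists i.
rewrite negb_exists => /forallP near.
have [E E_le quotE] :=
  near_orbit_quotient k_lt (leqnn _) (fun h h_lt => near (Ordinal h_lt)).
set P := r ^ m.+1 in E_le quotE; set x := (k * P) %% N.
have x_lt : x < N := ltn_pmod _ N_gt0.
have closed : (r - 1) * N = 1 + P * (r - 2) := circ_bound_closed r_ge2 m.+1.
(* [k P = (E + x) + ((r-2) E) P] with [E + x < P], so [E + x = 0]. *)
have kP : k * P = (r - 2) * E * P + (E + x).
  rewrite {1}(divn_eq (k * P) N) quotE -/x mulnAC mulnC closed.
  by rewrite mulnDr muln1 mulnCA mulnC; lia.
have Ex_lt : E + x < P by have := circ_bound_le_pow r_ge2 m.+1; lia.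
have Ex0 : E + x = 0.
  by have := congr1 (modn^~ P) kP; rewrite modnMl modnMDl modn_small.
have P_gt0 : 0 < P by rewrite expn_gt0; lia.
have E0 : E = 0 by lia.
by move/eqP: kP; rewrite Ex0 E0 muln0 mul0n muln_eq0; lia.
Qed.

End FarPower.

Section Independence.
Variables (T : finType) (e : rel T).

Lemma alpha_ge (S : {set T}) : independent e S -> #|S| <= alpha e.
Proof. by move=> indS; apply: (leq_bigmax_cond (F := fun S : {set T} => #|S|)). Qed.

Lemma alpha_le b : (forall S, independent e S -> #|S| <= b) -> alpha e <= b.
Proof. by move=> bound; apply/bigmax_leqP. Qed.

Lemma independentP (S : {set T}) : irreflexive e ->
  reflect (forall x y, x \in S -> y \in S -> (x == y) || e x y -> x = y)
          (independent e S).
Proof.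
move=> e_irr; apply: (iffP forall_inP) => [indS x y xS yS | indS x xS].
  by case: eqVneq => [//|_] /=; move/forall_inP/(_ y yS): (indS x xS) => /negPf ->.
apply/forall_inP => y yS; apply/negP => exy.
have x_eq_y : x = y by apply: indS; rewrite ?exy ?orbT.
by move: exy; rewrite x_eq_y e_irr.
Qed.

End Independence.

Section StrongPower.
Variables (T : finType) (e : rel T).

Lemma strong_pow_irr n : irreflexive (@strong_pow _ e n).
Proof. by move=> u; rewrite /strong_pow eqxx. Qed.

Lemma strong_pow_touch n (u v : {ffun 'I_n -> T}) :
  (u == v) || @strong_pow _ e n u v = [forall i, (u i == v i) || e (u i) (v i)].
Proof.
rewrite /strong_pow; case: eqVneq => [->|] //=.
by apply/esym/forallP => i; rewrite eqxx.
Qed.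

Definition init {n} (u : {ffun 'I_n.+1 -> T}) : {ffun 'I_n -> T} :=
  [ffun i => u (widen_ord (leqnSn n) i)].

Lemma forall_ord_succ n (P : pred 'I_n.+1) :
  [forall i, P i] = [forall i : 'I_n, P (widen_ord (leqnSn n) i)] && P ord_max.
Proof.
apply/forallP/andP => [P_all | [/forallP P_init P_last] i].
  by split => //; apply/forallP.
have [i_lt | i_ge] := ltnP i n; last first.
  by have -> : i = ord_max by apply: val_inj => /=; have := ltn_ord i; lia.
by have -> : i = widen_ord (leqnSn n) (Ordinal i_lt) by apply: val_inj.
Qed.

Lemma strong_pow_succ_touch n (u v : {ffun 'I_n.+1 -> T}) :
  (u == v) || @strong_pow _ e n.+1 u v =
  ((init u == init v) || @strong_pow _ e n (init u) (init v)) &&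
  ((u ord_max == v ord_max) || e (u ord_max) (v ord_max)).
Proof.
rewrite !strong_pow_touch forall_ord_succ; congr andb.
by apply: eq_forallb => i; rewrite !ffunE.
Qed.

Definition clique (W : {set T}) : bool :=
  [forall x in W, forall y in W, (x == y) || e x y].

(* The words of an independent set of [G^(n+1)] whose last letter lies in a fixed
   clique are separated by their first [n] letters, so there are at most [alpha(G^n)]. *)
Lemma independent_clique_slice n (S : {set {ffun 'I_n.+1 -> T}}) (W : {set T}) :
  clique W -> independent (@strong_pow _ e n.+1) S ->
  #|[set u in S | u ord_max \in W]| <= alpha (@strong_pow _ e n).
Proof.
move=> /forall_inP cliqueW /(independentP _ (@strong_pow_irr n.+1)) indS.
have last_touch u v : u \in [set u in S | u ord_max \in W] ->
    v \in [set u in S | u ord_max \in W] ->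
    (init u == init v) || @strong_pow _ e n (init u) (init v) -> u = v.
  rewrite !inE => /andP [uS uW] /andP [vS vW] init_touch; apply: indS => //.
  by rewrite strong_pow_succ_touch init_touch (forall_inP (cliqueW _ uW)).
have init_inj : {in [set u in S | u ord_max \in W] &, injective init}.
  by move=> u v uS vS init_eq; apply: last_touch; rewrite ?init_eq ?eqxx.
rewrite -(card_in_imset init_inj); apply: alpha_ge.
apply/(independentP _ (@strong_pow_irr n)) => _ _ /imsetP [u uS ->] /imsetP [v vS ->].
by move=> init_touch; rewrite (last_touch u v).
Qed.

Lemma independent_strong_pow_succ (I : finType) (W : I -> {set T}) d n
    (S : {set {ffun 'I_n.+1 -> T}}) :
  (forall j, clique (W j)) -> (forall x, #|[set j | x \in W j]| = d) ->
  independent (@strong_pow _ e n.+1) S -> d * #|S| <= #|I| * alpha (@strong_pow _ e n).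
Proof.
move=> cliqueW coverW indS.
have card_cond (A : {pred {ffun 'I_n.+1 -> T}}) (P : pred {ffun 'I_n.+1 -> T}) :
    #|[set u in A | P u]| = \sum_(u in A) P u.
  by rewrite -sum1dep_card big_mkcondr; apply: eq_bigr => u _; case: (P u).
have double_count : \sum_j #|[set u in S | u ord_max \in W j]| = d * #|S|.
  under eq_bigr => j _ do rewrite card_cond.
  rewrite exchange_big /= mulnC -sum_nat_const; apply: eq_bigr => u _.
  rewrite -(coverW (u ord_max)) -sum1dep_card [RHS]big_mkcond.
  by apply: eq_bigr => j _; case: (_ \in _).
rewrite -double_count -sum_nat_const; apply: leq_sum => j _.
exact: independent_clique_slice.
Qed.

End StrongPower.

Lemma circ_adj_sym q d : symmetric (@circ_adj q d).
Proof. by move=> x y; rewrite /circ_adj eq_sym (maxnC x) (minnC x). Qed.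

Lemma mod_sub q a j : a < q -> j < q ->
  (a + q - j) %% q = if j <= a then a - j else a + q - j.
Proof.
move=> a_lt j_lt; case: ifP => j_le; last by rewrite modn_small; lia.
by rewrite -addnBAC // modnDr modn_small //; lia.
Qed.

(* The window of [d] consecutive vertices [j, j+1, ..., j+d-1] of [C_{d,q}]. *)
Definition window {q} (d : nat) (j : 'I_q) : {set 'I_q} :=
  [set x : 'I_q | (x + q - j) %% q < d].

Lemma window_clique q d j : clique (@circ_adj q d) (window d j).
Proof.
apply/forall_inP => a; rewrite inE => a_in; apply/forall_inP => b; rewrite inE => b_in.
case: eqVneq => //= a_neq_b; rewrite /circ_adj a_neq_b /=.
have a_lt := ltn_ord a; have b_lt := ltn_ord b; have j_lt := ltn_ord j.
have /eqP a_neq_b' : val a != val b by [].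
move: a_in b_in; rewrite !mod_sub //; do 2 case: ifP; lia.
Qed.

Lemma card_windows q d : d <= q -> forall x : 'I_q, #|[set j | x \in window d j]| = d.
Proof.
move=> d_le x; have q_gt0 : 0 < q by have := ltn_ord x; lia.
pose offset (j : 'I_q) : 'I_q := Ordinal (ltn_pmod (x + q - j) q_gt0).
have offset_inj : injective offset.
  move=> j k /(congr1 val) /=; have x_lt := ltn_ord x.
  rewrite !mod_sub // => eq_off; apply: val_inj => /=; move: eq_off.
  have j_lt := ltn_ord j; have k_lt := ltn_ord k; do 2 case: ifP; lia.
have -> : [set j | x \in window d j] = offset @^-1: [set t : 'I_q | t < d].
  by apply/setP => j; rewrite !inE.
rewrite card_preimset //.
have -> : [set t : 'I_q | t < d] = widen_ord d_le @: [set: 'I_d].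
  apply/setP => t; rewrite inE.
  apply/idP/imsetP => [t_lt | [s _ ->] /=]; last exact: ltn_ord.
  by exists (Ordinal t_lt) => //; apply: val_inj.
rewrite card_imset ?cardsT ?card_ord //.
by move=> s t /(congr1 val) /= st; apply: val_inj.
Qed.

Lemma alpha_circ_pow_le r q d n : 2 <= r -> d <= q -> q < r * d ->
  alpha (@strong_pow _ (@circ_adj q d) n) <= circ_bound r n.
Proof.
move=> r_ge2 d_le q_lt; elim: n => [|n IH].
  apply: alpha_le => S _; apply: leq_trans (max_card S) _.
  by rewrite card_ffun !card_ord.
apply: alpha_le => S indS.
have := independent_strong_pow_succ (@window_clique q d) (card_windows d_le) indS.
rewrite card_ord => /leq_trans/(_ (leq_mul (leqnn q) IH)) dS_le.
have b_gt0 := circ_bound_gt0 r_ge2 n.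
have d_gt0 : 0 < d by rewrite lt0n; apply: contraTneq q_lt => ->; rewrite muln0.
have : d * #|S| < d * (r * circ_bound r n).
  by apply: leq_ltn_trans dS_le _; rewrite mulnA ltn_pmul2r // mulnC.
by rewrite ltn_pmul2l //= => S_lt; lia.
Qed.

Lemma circ_nonadj_shift N M (x y : 'I_N) c : 0 < M -> M <= c <= N - M ->
  val y = (x + c) %% N -> ~~ ((x == y) || @circ_adj N M x y).
Proof.
move=> M_gt0 /andP [c_ge c_le] y_eq; have x_lt := ltn_ord x.
have c_lt : c < N by lia.
have : val y = if x + c < N then x + c else x + c - N.
  case: ifP => sum_lt; first by rewrite y_eq modn_small.
  have N_le : N <= x + c by rewrite leqNgt sum_lt.
  by rewrite y_eq -(subnK N_le) modnDr modn_small; lia.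
rewrite /circ_adj -val_eqE /=; case: ifP; lia.
Qed.

(* Lower bound: for [N = b_(m+1)] and [M = b_m], the [N] words
   [w_k = (k, k r, k r^2, ..., k r^m) mod N] form an independent set of
   [C_{M,N}^(m+1)]: for [l < k] some [(k - l) r^i] is far from 0 modulo [N]. *)
Lemma alpha_circ_pow_ge r m : 3 <= r ->
  circ_bound r m.+1 <=
  alpha (@strong_pow _ (@circ_adj (circ_bound r m.+1) (circ_bound r m)) m.+1).
Proof.
move=> r_ge3; have r_ge2 : 2 <= r by apply: ltnW.
set N := circ_bound r m.+1; set M := circ_bound r m.
have N_gt0 : 0 < N := circ_bound_gt0 r_ge2 _.
have M_gt0 : 0 < M := circ_bound_gt0 r_ge2 _.
pose word (k : 'I_N) : {ffun 'I_m.+1 -> 'I_N} :=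
  [ffun i : 'I_m.+1 => Ordinal (ltn_pmod (k * r ^ i) N_gt0)].
have word_inj : injective word.
  move=> k l /(congr1 (fun w : {ffun 'I_m.+1 -> 'I_N} => val (w ord0))).
  by rewrite !ffunE /= !muln1 !modn_small // => /val_inj.
have words_apart (k l : 'I_N) : l < k ->
    exists i, ~~ ((word l i == word k i) || @circ_adj N M (word l i) (word k i)).
  move=> l_lt_k; have k_lt := ltn_ord k.
  have kl_range : 0 < k - l < N by lia.
  have [i i_lt far_i] := far_power r_ge3 kl_range.
  exists (Ordinal i_lt); apply: (circ_nonadj_shift M_gt0 far_i); rewrite !ffunE /=.
  rewrite modnDm -mulnDl subnKC //; exact: ltnW.
rewrite -[X in X <= _]card_ord -(card_imset _ word_inj); apply: alpha_ge.
apply/(independentP _ (@strong_pow_irr _ _ _)) => _ _ /imsetP [k _ ->] /imsetP [l _ ->].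
rewrite strong_pow_touch => /forallP touch; congr word.
have [k_lt_l | l_lt_k | /val_inj //] := ltngtP k l.
- by have [i] := words_apart _ _ k_lt_l; rewrite touch.
- have [i] := words_apart _ _ l_lt_k.
  by rewrite [_ == _]eq_sym [circ_adj _ _ _]circ_adj_sym touch.
Qed.

Theorem theorem9p1 (r n : nat) :
  3 <= r -> 1 <= n ->
  (exists q d : nat, [/\ 0 < d, 2 * d <= q, q < r * d &
      @alpha _ (@strong_pow _ (@circ_adj q d) n) = (1 + r ^ n * (r - 2)) %/ (r - 1)])
  /\
  (forall q d : nat, 0 < d -> 2 * d <= q -> q < r * d ->
      @alpha _ (@strong_pow _ (@circ_adj q d) n) <= (1 + r ^ n * (r - 2)) %/ (r - 1)).
Proof.
move=> r_ge3 n_ge1; have r_ge2 : 2 <= r by apply: ltnW.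
rewrite circ_bound_div //; split; last first.
  by move=> q d _ d2_le q_lt; apply: alpha_circ_pow_le => //; lia.
case: n n_ge1 => [//|m] _; have M_gt0 := circ_bound_gt0 r_ge2 m.
exists (circ_bound r m.+1), (circ_bound r m); split => //=; [nia | lia |].
apply/eqP; rewrite eqn_leq alpha_circ_pow_ge // andbT.
by apply: alpha_circ_pow_le => //=; nia.
Qed.
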